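(* Every finitely generated multi-ended group is extraterrestrial.
   Context: A finitely generated group $\Gamma$ is multi-ended if for some finite symmetric generating set $S$ there is a finite set $F\subset\Gamma$ such that removing $F$ from the Cayley graph $\mathrm{Cay}(\Gamma,S)$ leaves at least two infinite connected components. A finitely generated group is extraterrestrial if its Cayley graph with respect to some (equivalently any) finite symmetric generating set is extraterrestrial, where a graph $G=(V,E)$ is extraterrestrial if for every $m$ there is $k$ such that for every $r$ there is an $(m,k,r)$-UFO: pairwise disjoint finite $U,F,O\subseteq V$ with $U\neq\emptyset$, $|U|\ge m|F|$, a bijection $\mu:U\to O$ with $d_G(u,\mu(u))\le k$, and every path from $U$ to $O$ either contains a vertex of $F$ or has length at least $r$. *)

From Stdlib Require Import List Arith.
Import ListNotations.

Record Group := {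
  carrier :> Type;
  gmul : carrier -> carrier -> carrier;
  gone : carrier;
  ginv : carrier -> carrier;
  gmul_assoc : forall x y z, gmul x (gmul y z) = gmul (gmul x y) z;
  gmul_1l : forall x, gmul gone x = x;
  gmul_Vl : forall x, gmul (ginv x) x = gone
}.

(** [walk adj x p]: x = p_0, p_1, ..., p_n (with p = [p_1;...;p_n]) is a
    walk, i.e. consecutive vertices are adjacent. Its length is [length p]
    and it ends at [last p x]. *)
Fixpoint walk {V : Type} (adj : V -> V -> Prop) (x : V) (p : list V) : Prop :=
  match p with
  | [] => True
  | y :: q => adj x y /\ walk adj y q
  end.

Definition dist_le {V : Type} (adj : V -> V -> Prop) (u v : V) (k : nat) : Prop :=
  exists p, walk adj u p /\ last p u = v /\ length p <= k.

Definition is_UFO {V : Type} (adj : V -> V -> Prop) (m k r : nat)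
    (U F O : list V) (mu : V -> V) : Prop :=
  NoDup U /\ NoDup F /\ NoDup O /\
  (forall v, In v U -> ~ In v F) /\
  (forall v, In v U -> ~ In v O) /\
  (forall v, In v F -> ~ In v O) /\
  U <> [] /\
  m * length F <= length U /\
  (forall u, In u U -> In (mu u) O) /\
  (forall u1 u2, In u1 U -> In u2 U -> mu u1 = mu u2 -> u1 = u2) /\
  (forall o, In o O -> exists u, In u U /\ mu u = o) /\
  (forall u, In u U -> dist_le adj u (mu u) k) /\
  (forall u p, In u U -> walk adj u p -> In (last p u) O ->
     (exists v, In v (u :: p) /\ In v F) \/ r <= length p).

Definition extraterrestrial_graph {V : Type} (adj : V -> V -> Prop) : Prop :=
  forall m : nat, exists k : nat, forall r : nat,
    exists (U F O : list V) (mu : V -> V), is_UFO adj m k r U F O mu.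

Definition symmetric_set (G : Group) (S : list G) : Prop :=
  forall s, In s S -> In (ginv G s) S.

Definition prod_list (G : Group) (l : list G) : G :=
  fold_right (gmul G) (gone G) l.

(** S generates G (as a monoid; for symmetric S this equals group generation) *)
Definition generates (G : Group) (S : list G) : Prop :=
  forall g : G, exists l : list G, (forall s, In s l -> In s S) /\ g = prod_list G l.

Definition fin_sym_gen_set (G : Group) (S : list G) : Prop :=
  symmetric_set G S /\ generates G S.

Definition finitely_generated (G : Group) : Prop :=
  exists S : list G, fin_sym_gen_set G S.

Definition cayley_adj (G : Group) (S : list G) (g h : G) : Prop :=
  exists s, In s S /\ h = gmul G g s.

Definition conn_avoid {V : Type} (adj : V -> V -> Prop) (F : list V) (x y : V) : Prop :=
  exists p, walk adj x p /\ last p x = y /\ (forall v, In v (x :: p) -> ~ In v F).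

Definition infinite_component {V : Type} (adj : V -> V -> Prop) (F : list V) (x : V) : Prop :=
  ~ In x F /\ ~ exists l : list V, forall y, conn_avoid adj F x y -> In y l.

Definition at_least_two_infinite_components {V : Type} (adj : V -> V -> Prop) (F : list V) : Prop :=
  exists x y, infinite_component adj F x /\ infinite_component adj F y /\
              ~ conn_avoid adj F x y.

Definition multi_ended (G : Group) : Prop :=
  exists S : list G, fin_sym_gen_set G S /\
    exists F : list G, at_least_two_infinite_components (cayley_adj G S) F.

Definition extraterrestrial_group (G : Group) : Prop :=
  exists S : list G, fin_sym_gen_set G S /\ extraterrestrial_graph (cayley_adj G S).

(** Let [F] be a finite set whose removal leaves two distinct infinite
    components [C1] and [C2]. Given [m], take [U] in [C1] and [O] in [C2], both
    of size [m |F| + 1], and pair them by any bijection [mu]: the Cayley graph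
    is connected, so [d(u, mu u)] is bounded by some [k] depending only on [m].
    Any path from [U] to [O] avoiding [F] would join [C1] to [C2], so it must
    meet [F], whatever [r] is. *)

From Stdlib Require Import List Arith Lia Relations Classical ClassicalEpsilon.
Import ListNotations.

Lemma last_cons {A : Type} (a x : A) (p : list A) : last (a :: p) x = last p a.
Proof.
  revert a x. induction p as [|b p IH]; intros a x; [reflexivity|].
  change (last (b :: p) x = last (b :: p) a). now rewrite !IH.
Qed.

Lemma In_last {A : Type} (x : A) (p : list A) : In (last p x) (x :: p).
Proof.
  revert x. induction p as [|a p IH]; intro x; [now left|].
  rewrite last_cons. right. apply IH.
Qed.

Lemma infinite_NoDup_list {A : Type} (P : A -> Prop) :
  ~ (exists l, forall y, P y -> In y l) ->
  forall n, exists l, NoDup l /\ length l = n /\ forall y, In y l -> P y.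
Proof.
  intros Hinf n. induction n as [|n [l [Hnd [Hlen HP]]]].
  - exists []. repeat split; [constructor | intros y []].
  - assert (Hnew : exists y, P y /\ ~ In y l).
    { apply NNPP. intro Hno. apply Hinf. exists l. intros y Py.
      apply NNPP. intro. apply Hno. eauto. }
    destruct Hnew as [y [Py Hy]].
    exists (y :: l). repeat split; [now constructor | simpl; lia |].
    intros z [<-|Hz]; auto.
Qed.

Lemma NoDup_dedup {A : Type} (l : list A) :
  exists l', NoDup l' /\ length l' <= length l /\ forall v, In v l' <-> In v l.
Proof.
  set (dec := fun x y : A => excluded_middle_informative (x = y)).
  exists (nodup dec l). split; [apply NoDup_nodup|]. split.
  - apply NoDup_incl_length; [apply NoDup_nodup|]. intros v. apply nodup_In.
  - apply nodup_In.
Qed.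

Lemma list_bijection {A : Type} (U O : list A) :
  length U = length O -> NoDup U -> NoDup O ->
  exists mu : A -> A,
    (forall u, In u U -> In (mu u) O) /\
    (forall u1 u2, In u1 U -> In u2 U -> mu u1 = mu u2 -> u1 = u2) /\
    (forall o, In o O -> exists u, In u U /\ mu u = o).
Proof.
  revert O. induction U as [|u U IH]; intros O Hlen HU HO.
  - destruct O; [|discriminate]. exists id. repeat split; intros; contradiction.
  - destruct O as [|o O]; [discriminate|].
    apply NoDup_cons_iff in HU as [HuU HU]. apply NoDup_cons_iff in HO as [HoO HO].
    destruct (IH O ltac:(simpl in Hlen; lia) HU HO) as [mu [Hmaps [Hinj Hsurj]]].
    exists (fun z => if excluded_middle_informative (z = u) then o else mu z).
    split; [|split].
    + intros z Hz. destruct (excluded_middle_informative (z = u)); [now left|].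
      right. destruct Hz; [congruence|auto].
    + intros z1 z2 Hz1 Hz2.
      destruct (excluded_middle_informative (z1 = u)), (excluded_middle_informative (z2 = u));
        try congruence; destruct Hz1 as [|Hz1]; try congruence;
        destruct Hz2 as [|Hz2]; try congruence; intro E.
      * exfalso. apply HoO. rewrite E. auto.
      * exfalso. apply HoO. rewrite <- E. auto.
      * auto.
    + intros o' [<-|Ho'].
      * exists u. split; [now left|]. now destruct (excluded_middle_informative (u = u)).
      * destruct (Hsurj o' Ho') as [u' [Hu' <-]]. exists u'. split; [now right|].
        destruct (excluded_middle_informative (u' = u)); [subst; contradiction|auto].
Qed.

Section Graph.
Variables (V : Type) (adj : V -> V -> Prop).

Definition connected_graph : Prop := forall a b, exists d, dist_le adj a b d.

Lemma dist_le_mono a b k k' : dist_le adj a b k -> k <= k' -> dist_le adj a b k'.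
Proof. intros [p [Hw [Hl Hk]]] Hkk'. exists p. repeat split; auto. lia. Qed.

Lemma connected_dist_bound (f : V -> V) (U : list V) :
  connected_graph -> exists k, forall u, In u U -> dist_le adj u (f u) k.
Proof.
  intros Hconn. induction U as [|u U [k Hk]]; [now exists 0|].
  destruct (Hconn u (f u)) as [d Hd].
  exists (max k d). intros z [<-|Hz]; eapply dist_le_mono; eauto; lia.
Qed.

Variable F : list V.

Definition avoid_edge (a b : V) : Prop := adj a b /\ ~ In a F /\ ~ In b F.

Lemma walk_avoid_rt p x : walk adj x p -> (forall v, In v (x :: p) -> ~ In v F) ->
  clos_refl_trans V avoid_edge x (last p x).
Proof.
  revert x. induction p as [|a p IH]; intros x Hwalk Hv; [apply rt_refl|].
  destruct Hwalk as [Ha Hw]. rewrite last_cons. apply rt_trans with a.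
  - apply rt_step. repeat split; [exact Ha | apply Hv; simpl; auto ..].
  - apply IH; [exact Hw|]. intros v Hin. apply Hv. now right.
Qed.

Lemma conn_avoidP x y :
  conn_avoid adj F x y <-> ~ In x F /\ clos_refl_trans V avoid_edge x y.
Proof.
  split.
  - intros [p [Hw [<- Hv]]]. split; [apply Hv; now left|]. now apply walk_avoid_rt.
  - intros [Hx Hxy]. apply clos_rt_rt1n in Hxy.
    induction Hxy as [x|x y z [Ha [_ Hy]] _ IH].
    + exists []. repeat split. intros v [<-|[]]; auto.
    + destruct (IH Hy) as [p [Hw [Hl Hv]]]. exists (y :: p).
      repeat split; auto; [now rewrite last_cons|]. intros v [<-|Hin]; auto.
Qed.

Lemma conn_avoid_notin_target x y : conn_avoid adj F x y -> ~ In y F.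
Proof. intros [p [_ [<- Hv]]]. apply Hv, In_last. Qed.

Lemma conn_avoid_trans x y z :
  conn_avoid adj F x y -> conn_avoid adj F y z -> conn_avoid adj F x z.
Proof.
  rewrite !conn_avoidP. intros [Hx Hxy] [_ Hyz]. split; [exact Hx|]. eapply rt_trans; eauto.
Qed.

Hypothesis adj_sym : forall a b, adj a b -> adj b a.

Lemma conn_avoid_sym x y : conn_avoid adj F x y -> conn_avoid adj F y x.
Proof.
  intros Hxy. apply conn_avoidP. split; [exact (conn_avoid_notin_target _ _ Hxy)|].
  apply conn_avoidP in Hxy as [_ Hxy]. induction Hxy as [a b [Hab [Ha Hb]]| |];
    [apply rt_step; repeat split; auto | apply rt_refl | eapply rt_trans; eauto].
Qed.

Lemma two_infinite_components_extraterrestrial :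
  connected_graph -> at_least_two_infinite_components adj F -> extraterrestrial_graph adj.
Proof.
  intros Hconn [x [y [[Hx Hxinf] [[Hy Hyinf] Hxy]]]] m.
  destruct (NoDup_dedup F) as [F' [HF' [HlenF HinF]]].
  destruct (infinite_NoDup_list _ Hxinf (S (m * length F))) as [U [HU [HlenU HUx]]].
  destruct (infinite_NoDup_list _ Hyinf (S (m * length F))) as [O [HO [HlenO HOy]]].
  destruct (list_bijection U O ltac:(congruence) HU HO) as [mu [Hmaps [Hinj Hsurj]]].
  destruct (connected_dist_bound mu U Hconn) as [k Hk].
  exists k. intro r. exists U, F', O, mu.
  assert (Hsep : forall u o, In u U -> In o O -> ~ conn_avoid adj F u o).
  { intros u o Hu Ho Huo. apply Hxy.
    apply conn_avoid_trans with u; [auto|].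
    apply conn_avoid_trans with o; [auto|]. now apply conn_avoid_sym, HOy. }
  repeat split; auto.
  - intros v Hv Hf. apply (conn_avoid_notin_target _ _ (HUx v Hv)), HinF, Hf.
  - intros v Hv Ho. apply (Hsep v v Hv Ho). exists []. repeat split.
    intros w [<-|[]]. exact (conn_avoid_notin_target _ _ (HUx v Hv)).
  - intros v Hf Ho. apply (conn_avoid_notin_target _ _ (HOy v Ho)), HinF, Hf.
  - now destruct U.
  - rewrite HlenU. pose proof (Nat.mul_le_mono_l _ _ m HlenF). lia.
  - intros u p Hu Hw Ho. left. apply NNPP. intro Hmeet.
    apply (Hsep u (last p u) Hu Ho). exists p. repeat split; auto.
    intros v Hv HvF. apply Hmeet. exists v. split; [exact Hv|]. now apply HinF.
Qed.

End Graph.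

Section Cayley.
Variable G : Group.

Lemma gmul_Vr (x : G) : gmul G x (ginv G x) = gone G.
Proof.
  set (e := gmul G x (ginv G x)).
  assert (He : gmul G e e = e).
  { unfold e. rewrite <- gmul_assoc, (gmul_assoc G (ginv G x) x), gmul_Vl, gmul_1l.
    reflexivity. }
  transitivity (gmul G (gmul G (ginv G e) e) e).
  - now rewrite gmul_Vl, gmul_1l.
  - now rewrite <- gmul_assoc, He, gmul_Vl.
Qed.

Lemma gmul_1r (x : G) : gmul G x (gone G) = x.
Proof. rewrite <- (gmul_Vl G x), gmul_assoc, gmul_Vr, gmul_1l. reflexivity. Qed.

Variable S : list G.

Fixpoint cayley_walk (a : G) (l : list G) : list G :=
  match l with
  | [] => []
  | s :: l' => gmul G a s :: cayley_walk (gmul G a s) l'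
  end.

Lemma cayley_walkP l a : (forall s, In s l -> In s S) ->
  walk (cayley_adj G S) a (cayley_walk a l) /\
  last (cayley_walk a l) a = gmul G a (prod_list G l) /\
  length (cayley_walk a l) = length l.
Proof.
  revert a. induction l as [|s l IH]; intros a Hl.
  - simpl. rewrite gmul_1r. auto.
  - destruct (IH (gmul G a s)) as [Hw [Hlast Hlen]]; [intros; apply Hl; now right|].
    cbn [cayley_walk walk length prod_list fold_right]. repeat split; auto.
    + exists s. split; [apply Hl; now left | reflexivity].
    + rewrite last_cons, Hlast. symmetry. apply gmul_assoc.
Qed.

Lemma cayley_adj_sym : symmetric_set G S ->
  forall a b, cayley_adj G S a b -> cayley_adj G S b a.
Proof.
  intros Hsym a b [s [Hs ->]]. exists (ginv G s). split; [now apply Hsym|].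
  now rewrite <- gmul_assoc, gmul_Vr, gmul_1r.
Qed.

Lemma cayley_connected : generates G S -> connected_graph G (cayley_adj G S).
Proof.
  intros Hgen a b. destruct (Hgen (gmul G (ginv G a) b)) as [l [Hl Hab]].
  destruct (cayley_walkP l a Hl) as [Hw [Hlast Hlen]].
  exists (length l), (cayley_walk a l). repeat split; [exact Hw| |lia].
  now rewrite Hlast, <- Hab, gmul_assoc, gmul_Vr, gmul_1l.
Qed.

End Cayley.

Theorem mainTheorem6 (G : Group) :
  finitely_generated G -> multi_ended G -> extraterrestrial_group G.
Proof.
  intros _ [S [[Hsym Hgen] [F Hends]]].
  exists S. split; [now split|].
  apply (two_infinite_components_extraterrestrial G (cayley_adj G S) F).
  - now apply cayley_adj_sym.
  - now apply cayley_connected.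
  - exact Hends.
Qed.
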